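(* Suppose $\alpha$ is a computable real number. Then there exists a pair $(A,E)$ of $\mathfrak{PR}$-sequences $A,E:\mathbb{N}\to\mathbb{Q}$ such that $E(\mathbb{N})$ contains elements arbitrarily close to $0$ and $|A(x)-\alpha|\le E(x)$ for all $x\in\mathbb{N}$.
   Context: $\mathbb{N}=\{0,1,2,\dots\}$. $\mathfrak{PR}$ denotes the primitive recursive functions and $\mathfrak{R}$ the (total) recursive functions $\mathbb{N}^n\to\mathbb{N}$. For $\mathcal{F}\in\{\mathfrak{PR},\mathfrak{R}\}$, an $\mathcal{F}$-sequence is a function $A:\mathbb{N}\to\mathbb{Q}$ of the form $A(x)=\frac{f(x)-g(x)}{h(x)+1}$ with $f,g,h:\mathbb{N}\to\mathbb{N}$ in $\mathcal{F}$. A real $\alpha$ is computable if there is an $\mathfrak{R}$-sequence $A$ with $|A(x)-\alpha|\le\frac1{x+1}$ for all $x$. *)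

From Stdlib Require Vector Fin.
From Stdlib Require Import Reals QArith Qabs Qreals.
Set Implicit Arguments.
Local Open Scope nat_scope.

Inductive code : nat -> Type :=
| CZero (n : nat) : code n
| CSucc : code 1
| CProj (n : nat) (i : Fin.t n) : code n
| CComp (m n : nat) (f : code m) (gs : Fin.t m -> code n) : code n
| CPrec (n : nat) (g : code n) (h : code (S (S n))) : code (S n)
                     (* f(0,x) = g x ; f(y+1,x) = h(y, f(y,x), x) *)
| CMu (n : nat) (f : code (S n)) : code n.
                     (* least y with f(y,x)=0 and f(z,x) defined for z<y *)

(* Big-step (relational) semantics: ev c v y  means  c(v) is defined and = y. *)
Inductive ev : forall n, code n -> Vector.t nat n -> nat -> Prop :=
| ev_zero n v : ev (@CZero n) v 0
| ev_succ v : ev CSucc v (S (Vector.hd v))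
| ev_proj n i v : ev (@CProj n i) v (Vector.nth v i)
| ev_comp m n (f : code m) (gs : Fin.t m -> code n) v (w : Vector.t nat m) y :
    (forall i, ev (gs i) v (Vector.nth w i)) -> ev f w y -> ev (CComp f gs) v y
| ev_prec0 n (g : code n) h v y :
    ev g v y -> ev (CPrec g h) (Vector.cons nat 0 n v) y
| ev_precS n (g : code n) h k v z y :
    ev (CPrec g h) (Vector.cons nat k n v) z ->
    ev h (Vector.cons nat k _ (Vector.cons nat z n v)) y ->
    ev (CPrec g h) (Vector.cons nat (S k) n v) y
| ev_mu n (f : code (S n)) v y :
    ev f (Vector.cons nat y n v) 0 ->
    (forall z, z < y -> exists r, ev f (Vector.cons nat z n v) (S r)) ->
    ev (CMu f) v y.

Fixpoint isPRcode n (c : code n) : Prop :=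
  match c with
  | CZero _ | CSucc | CProj _ => True
  | CComp f gs => isPRcode f /\ forall i, isPRcode (gs i)
  | CPrec g h => isPRcode g /\ isPRcode h
  | CMu _ => False
  end.

Definition vec1 (x : nat) : Vector.t nat 1 := Vector.cons nat x 0 (Vector.nil nat).

Definition isPR (f : nat -> nat) : Prop :=
  exists c : code 1, isPRcode c /\ forall x, ev c (vec1 x) (f x).

Definition isRec (f : nat -> nat) : Prop :=
  exists c : code 1, forall x, ev c (vec1 x) (f x).

Local Open Scope Q_scope.
Definition Fseq (F : (nat -> nat) -> Prop) (A : nat -> Q) : Prop :=
  exists f g h : nat -> nat, F f /\ F g /\ F h /\
    forall x, A x == (inject_Z (Z.of_nat (f x)) - inject_Z (Z.of_nat (g x)))
                     / inject_Z (Z.of_nat (h x + 1)).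

Definition PRseq := Fseq isPR.
Definition Rseq := Fseq isRec.

Definition computable_real (alpha : R) : Prop :=
  exists A : nat -> Q, Rseq A /\
    forall x, (Rabs (Q2R (A x) - alpha) <= 1 / (INR x + 1))%R.

(* Write the computable approximation as [A = (f - g) / (h + 1)] with [f], [g], [h]
   computed by codes.  Running a code with every unbounded search cut off at [t] is
   primitive recursive in [t] and monotone in [t], and every convergent computation is
   reached for all large [t].  At stage [x], take the largest [j <= x] at which all three
   codes have converged within [x] steps and output [A j] with error bound [1 / (j + 1)],
   which is correct by hypothesis; if there is no such [j], output [0] with a bound
   [M >= |alpha|].  Every [j] is reached at some stage, so the error bounds become
   arbitrarily small. *)

From Stdlib Require Import Reals QArith Qabs Qreals.
From Stdlib Require Import Lia Lra.

Local Open Scope nat_scope.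

(** * Primitive recursive functions of several variables *)

Definition PRn n (f : Vector.t nat n -> nat) : Prop :=
  exists c : code n, isPRcode c /\ forall v, ev c v (f v).

Definition PRvec n m (B : Vector.t nat n -> Vector.t nat m) : Prop :=
  forall i, PRn n (fun v => Vector.nth (B v) i).

Lemma PRn_ext {n} {f g : Vector.t nat n -> nat} :
  PRn n f -> (forall v, f v = g v) -> PRn n g.
Proof. intros [c [Hc Ev]] E; exists c; split; [exact Hc | intros v; rewrite <- E; apply Ev]. Qed.

Lemma fin_choice {A : Type} {m} (P : Fin.t m -> A -> Prop) :
  (forall i, exists a, P i a) -> exists F, forall i, P i (F i).
Proof.
  revert P; induction m as [|m IH]; intros P H.
  - exists (fun i => Fin.case0 (fun _ => A) i); intros i; apply (Fin.case0 (fun i => P i _) i).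
  - destruct (H Fin.F1) as [a0 H0].
    destruct (IH (fun i => P (Fin.FS i))) as [F HF]; [intros i; apply H|].
    exists (fun i => Fin.caseS' i (fun _ => A) a0 F).
    intros i; apply (Fin.caseS' i); [exact H0 | exact HF].
Qed.

Lemma PRn_comp {m n} {f : Vector.t nat m -> nat} {B : Vector.t nat n -> Vector.t nat m} :
  PRn m f -> PRvec n m B -> PRn n (fun v => f (B v)).
Proof.
  intros [cf [Hcf Ef]] HB.
  destruct (fin_choice (fun i c => isPRcode c /\ forall v, ev c v (Vector.nth (B v) i)) HB)
    as [gs Hgs].
  exists (CComp cf gs); split.
  - split; [exact Hcf | intros i; apply Hgs].
  - intros v; apply ev_comp with (w := B v); [intros i; apply Hgs | apply Ef].
Qed.

Lemma PRvec_id n : PRvec n n (fun v : Vector.t nat n => v).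
Proof. intros i; exists (CProj i); split; [exact I | intros v; constructor]. Qed.

Lemma PRn_proj n (i : Fin.t n) : PRn n (fun v => Vector.nth v i).
Proof. exact (PRvec_id n i). Qed.

Lemma PRvec_comp {n m p} {B : Vector.t nat m -> Vector.t nat p}
  {C : Vector.t nat n -> Vector.t nat m} :
  PRvec m p B -> PRvec n m C -> PRvec n p (fun v => B (C v)).
Proof. intros HB HC i; exact (PRn_comp (HB i) HC). Qed.

Lemma PRvec_nil n : PRvec n 0 (fun _ : Vector.t nat n => Vector.nil nat).
Proof. intros i; apply (Fin.case0 (fun i => PRn n (fun _ => Vector.nth (Vector.nil nat) i)) i). Qed.

Lemma PRvec_cons {n m a} {B : Vector.t nat n -> Vector.t nat m} :
  PRn n a -> PRvec n m B -> PRvec n (S m) (fun v => Vector.cons nat (a v) m (B v)).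
Proof. intros Ha HB i; apply (Fin.caseS' i); [exact Ha | exact HB]. Qed.

Lemma PRvec_tl {n m} {B : Vector.t nat n -> Vector.t nat (S m)} :
  PRvec n (S m) B -> PRvec n m (fun v => Vector.tl (B v)).
Proof.
  intros HB i; apply (PRn_ext (HB (Fin.FS i))).
  intros v; generalize (B v); intros w; apply (Vector.caseS' w); reflexivity.
Qed.

Lemma PRn_hd {n m} {B : Vector.t nat n -> Vector.t nat (S m)} :
  PRvec n (S m) B -> PRn n (fun v => Vector.hd (B v)).
Proof.
  intros HB; apply (PRn_ext (HB Fin.F1)).
  intros v; generalize (B v); intros w; apply (Vector.caseS' w); reflexivity.
Qed.

Lemma PRn_tl {n} {f : Vector.t nat n -> nat} : PRn n f -> PRn (S n) (fun w => f (Vector.tl w)).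
Proof. intros Hf; exact (PRn_comp Hf (PRvec_tl (PRvec_id _))). Qed.

Lemma PRn_drop2 {n} {f : Vector.t nat n -> nat} :
  PRn n f -> PRn (S (S n)) (fun w => f (Vector.tl (Vector.tl w))).
Proof. intros Hf; exact (PRn_comp Hf (PRvec_tl (PRvec_tl (PRvec_id _)))). Qed.

Lemma PRn_prec {n g h k} : PRn n g -> PRn (S (S n)) h -> PRn n k ->
  PRn n (fun v => nat_rect (fun _ => nat) (g v)
     (fun j acc => h (Vector.cons nat j _ (Vector.cons nat acc _ v))) (k v)).
Proof.
  intros [cg [Hg Eg]] [ch [Hh Eh]] Hk.
  assert (Hrec : PRn (S n) (fun w => nat_rect (fun _ => nat) (g (Vector.tl w))
     (fun j acc => h (Vector.cons nat j _ (Vector.cons nat acc _ (Vector.tl w)))) (Vector.hd w))).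
  { exists (CPrec cg ch); split; [split; assumption|].
    intros w; apply (Vector.caseS' w); clear w; intros j v; simpl.
    induction j; simpl; [constructor; apply Eg | eapply ev_precS; eauto]. }
  exact (PRn_comp Hrec (PRvec_cons Hk (PRvec_id _))).
Qed.

Lemma PRn_succ {n a} : PRn n a -> PRn n (fun v => S (a v)).
Proof.
  intros Ha.
  assert (Hs : PRn 1 (fun w => S (Vector.hd w))) by (exists CSucc; split; [exact I | constructor]).
  exact (PRn_comp Hs (PRvec_cons Ha (PRvec_nil n))).
Qed.

Lemma PRn_const n k : PRn n (fun _ => k).
Proof.
  induction k as [|k IH].
  - exists (CZero n); split; [exact I | constructor].
  - exact (PRn_succ IH).
Qed.

Definition ifz (a b c : nat) : nat := match a with 0 => b | S _ => c end.

Lemma PRn_ifz {n a b c} : PRn n a -> PRn n b -> PRn n c -> PRn n (fun v => ifz (a v) (b v) (c v)).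
Proof.
  intros Ha Hb Hc; apply (PRn_ext (PRn_prec Hb (PRn_drop2 Hc) Ha)).
  intros v; destruct (a v); reflexivity.
Qed.

Lemma PRn_pred {n a} : PRn n a -> PRn n (fun v => pred (a v)).
Proof.
  intros Ha; apply (PRn_ext (PRn_prec (PRn_const n 0) (PRn_proj _ Fin.F1) Ha)).
  intros v; destruct (a v); reflexivity.
Qed.

Lemma PRn_add {n a b} : PRn n a -> PRn n b -> PRn n (fun v => a v + b v).
Proof.
  intros Ha Hb; apply (PRn_ext (PRn_prec Hb (PRn_succ (PRn_proj _ (Fin.FS Fin.F1))) Ha)).
  intros v; simpl; induction (a v) as [|k IH]; simpl; congruence.
Qed.

Lemma PRn_mul {n a b} : PRn n a -> PRn n b -> PRn n (fun v => a v * b v).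
Proof.
  intros Ha Hb.
  apply (PRn_ext (PRn_prec (PRn_const n 0) (PRn_add (PRn_proj _ (Fin.FS Fin.F1)) (PRn_drop2 Hb)) Ha)).
  intros v; simpl; induction (a v) as [|k IH]; simpl; [reflexivity | rewrite IH; lia].
Qed.

Fixpoint vec_of_fun (m : nat) : (Fin.t m -> nat) -> Vector.t nat m :=
  match m with
  | 0 => fun _ => Vector.nil nat
  | S m' => fun F => Vector.cons nat (F Fin.F1) m' (vec_of_fun m' (fun i => F (Fin.FS i)))
  end.

Lemma nth_vec_of_fun {m} (F : Fin.t m -> nat) i : Vector.nth (vec_of_fun m F) i = F i.
Proof. revert F; induction i as [m|m i IH]; intros F; simpl; auto. Qed.

Lemma vec_of_fun_nth {m} (v : Vector.t nat m) : vec_of_fun m (Vector.nth v) = v.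
Proof. induction v as [|x m v IH]; simpl; [reflexivity | f_equal; exact IH]. Qed.

Lemma vec_of_fun_ext {m} (F G : Fin.t m -> nat) :
  (forall i, F i = G i) -> vec_of_fun m F = vec_of_fun m G.
Proof.
  revert F G; induction m as [|m IH]; intros F G E; simpl; [reflexivity|].
  rewrite E; f_equal; apply IH; intros i; apply E.
Qed.

Lemma PRvec_of_fun {n m} (G : Fin.t m -> Vector.t nat n -> nat) :
  (forall i, PRn n (G i)) -> PRvec n m (fun v => vec_of_fun m (fun i => G i v)).
Proof. intros HG i; apply (PRn_ext (HG i)); intros v; rewrite nth_vec_of_fun; reflexivity. Qed.

Fixpoint prod_fin (m : nat) : (Fin.t m -> nat) -> nat :=
  match m with
  | 0 => fun _ => 1
  | S m' => fun F => F Fin.F1 * prod_fin m' (fun i => F (Fin.FS i))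
  end.

Lemma prod_fin_ext {m} (F G : Fin.t m -> nat) :
  (forall i, F i = G i) -> prod_fin m F = prod_fin m G.
Proof.
  revert F G; induction m as [|m IH]; intros F G E; simpl; [reflexivity|].
  rewrite E; f_equal; apply IH; intros i; apply E.
Qed.

Lemma prod_fin_neq0 {m} (F : Fin.t m -> nat) : prod_fin m F <> 0 <-> forall i, F i <> 0.
Proof.
  revert F; induction m as [|m IH]; intros F; simpl.
  - split; [intros _ i; apply (Fin.case0 (fun i => F i <> 0) i) | discriminate].
  - rewrite Nat.mul_eq_0; split.
    + intros H i; apply (Fin.caseS' i); [intros E; apply H; left; exact E|].
      apply IH; intros E; apply H; right; exact E.
    + intros H [E|E]; [exact (H _ E) | exact (proj2 (IH _) (fun j => H (Fin.FS j)) E)].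
Qed.

Lemma PRn_prod_fin {n m} (G : Fin.t m -> Vector.t nat n -> nat) :
  (forall i, PRn n (G i)) -> PRn n (fun v => prod_fin m (fun i => G i v)).
Proof.
  revert G; induction m as [|m IH]; intros G HG; simpl.
  - apply PRn_const.
  - apply PRn_mul; [apply HG | apply (IH (fun i => G (Fin.FS i))); intros i; apply HG].
Qed.

(** * Bounded evaluation of codes *)

(* [a z] encodes a possibly undefined value: [0] for undefined, [S y] for [y].  The search
   returns [S (S y)] if [y < s] is the least zero of [a] and [a] is defined below [y], [1] if
   it first meets an undefined value, and [0] if it meets neither below [s]. *)
Definition mu_search (a : nat -> nat) (s : nat) : nat :=
  nat_rect (fun _ => nat) 0 (fun z r => ifz r (ifz (a z) 1 (ifz (pred (a z)) (S (S z)) 0)) r) s.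

Lemma mu_search_S a s :
  mu_search a (S s) =
  ifz (mu_search a s) (ifz (a s) 1 (ifz (pred (a s)) (S (S s)) 0)) (mu_search a s).
Proof. reflexivity. Qed.

Lemma mu_search_zero a s : mu_search a s = 0 -> forall z, z < s -> 2 <= a z.
Proof.
  induction s as [|s IH]; intros H z Hz; [lia|].
  rewrite mu_search_S in H; destruct (mu_search a s) eqn:E; [|discriminate].
  destruct (a s) as [|[|r]] eqn:Ea; try discriminate.
  destruct (Nat.eq_dec z s) as [->|]; [lia | apply IH; [reflexivity | lia]].
Qed.

Lemma mu_search_found a s y :
  mu_search a s = S (S y) -> y < s /\ a y = 1 /\ forall z, z < y -> 2 <= a z.
Proof.
  induction s as [|s IH]; intros H; [discriminate|].
  rewrite mu_search_S in H; destruct (mu_search a s) eqn:E.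
  - destruct (a s) as [|[|r]] eqn:Ea; simpl in H; try discriminate.
    injection H as <-; split; [lia | split; [exact Ea | exact (mu_search_zero a s E)]].
  - simpl in H; destruct (IH H) as [Hy Hrest]; split; [lia | exact Hrest].
Qed.

Lemma mu_search_below a s y :
  (forall z, z < y -> 2 <= a z) -> s <= y -> mu_search a s = 0.
Proof.
  intros Hz; induction s as [|s IH]; intros Hs; [reflexivity|].
  rewrite mu_search_S, IH by lia; simpl.
  specialize (Hz s ltac:(lia)); destruct (a s) as [|[|r]]; [lia | lia | reflexivity].
Qed.

Lemma mu_search_finds a s y :
  a y = 1 -> (forall z, z < y -> 2 <= a z) -> y < s -> mu_search a s = S (S y).
Proof.
  intros Hy Hz; induction s as [|s IH]; intros Hs; [lia|].
  rewrite mu_search_S; destruct (Nat.eq_dec s y) as [->|].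
  - rewrite (mu_search_below a y y Hz), Hy by lia; reflexivity.
  - rewrite IH by lia; reflexivity.
Qed.

Lemma mu_search_stable a b s s' y :
  mu_search a s = S (S y) -> s <= s' -> (forall z, a z <> 0 -> b z = a z) ->
  mu_search b s' = S (S y).
Proof.
  intros E Hs Hab; destruct (mu_search_found _ _ _ E) as [Hys [Hy Hz]].
  apply mu_search_finds; [rewrite Hab; [exact Hy | lia] | | lia].
  intros z Hlt; specialize (Hz z Hlt); rewrite Hab by lia; exact Hz.
Qed.

Lemma PRn_mu_search {n} {a : Vector.t nat (S n) -> nat} {s} : PRn (S n) a -> PRn n s ->
  PRn n (fun v => mu_search (fun z => a (Vector.cons nat z n v)) (s v)).
Proof.
  intros Ha Hs.
  set (a' := fun w : Vector.t nat (S (S n)) =>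
         a (Vector.cons nat (Vector.nth w Fin.F1) n (Vector.tl (Vector.tl w)))).
  assert (Ha' : PRn _ a')
    by exact (PRn_comp Ha (PRvec_cons (PRn_proj _ Fin.F1) (PRvec_tl (PRvec_tl (PRvec_id _))))).
  exact (PRn_prec (PRn_const n 0)
    (PRn_ifz (PRn_proj _ (Fin.FS Fin.F1))
       (PRn_ifz Ha' (PRn_const _ 1)
          (PRn_ifz (PRn_pred Ha') (PRn_succ (PRn_succ (PRn_proj _ Fin.F1))) (PRn_const _ 0)))
       (PRn_proj _ (Fin.FS Fin.F1))) Hs).
Qed.

(* [bounded_eval c t v] is [S y] when [c] returns [y] on [v] with every unbounded search
   cut off at [t], and [0] when the computation does not finish within that bound. *)
Fixpoint bounded_eval {n} (c : code n) : nat -> Vector.t nat n -> nat :=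
  match c in code n return nat -> Vector.t nat n -> nat with
  | CZero _ => fun _ _ => 1
  | CSucc => fun _ v => S (S (Vector.hd v))
  | CProj i => fun _ v => S (Vector.nth v i)
  | @CComp m n f gs => fun t v =>
      ifz (prod_fin m (fun i => bounded_eval (gs i) t v)) 0
          (bounded_eval f t (vec_of_fun m (fun i => pred (bounded_eval (gs i) t v))))
  | @CPrec n g h => fun t v =>
      nat_rect (fun _ => nat) (bounded_eval g t (Vector.tl v))
        (fun j acc => ifz acc 0 (bounded_eval h t
           (Vector.cons nat j _ (Vector.cons nat (pred acc) _ (Vector.tl v)))))
        (Vector.hd v)
  | @CMu n f => fun t v =>
      pred (mu_search (fun z => bounded_eval f t (Vector.cons nat z n v)) t)
  end.

Lemma PRn_bounded_eval {n} (c : code n) :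
  forall k (t : Vector.t nat k -> nat) (B : Vector.t nat k -> Vector.t nat n),
  PRn k t -> PRvec k n B -> PRn k (fun v => bounded_eval c (t v) (B v)).
Proof.
  induction c as [n| |n i|m n f IHf gs IHgs|n g IHg h IHh|n f IHf];
    intros k t B Ht HB; simpl.
  - apply PRn_const.
  - exact (PRn_succ (PRn_succ (PRn_hd HB))).
  - exact (PRn_succ (HB i)).
  - apply PRn_ifz; [apply PRn_prod_fin; intros i; apply IHgs; assumption | apply PRn_const |].
    apply IHf; [exact Ht|].
    apply PRvec_of_fun; intros i; apply PRn_pred, IHgs; assumption.
  - assert (Hstep := IHh _ _ _ (PRn_drop2 Ht)
      (PRvec_cons (PRn_proj _ Fin.F1) (PRvec_cons (PRn_pred (PRn_proj _ (Fin.FS Fin.F1)))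
         (PRvec_tl (PRvec_comp HB (PRvec_tl (PRvec_tl (PRvec_id _)))))))).
    exact (PRn_prec (IHg _ _ _ Ht (PRvec_tl HB))
      (PRn_ifz (PRn_proj _ (Fin.FS Fin.F1)) (PRn_const _ 0) Hstep) (PRn_hd HB)).
  - apply PRn_pred.
    exact (PRn_mu_search (IHf _ _ _ (PRn_tl Ht)
      (PRvec_cons (PRn_hd (PRvec_id _)) (PRvec_comp HB (PRvec_tl (PRvec_id _))))) Ht).
Qed.

Lemma bounded_eval_mono {n} (c : code n) t t' v y :
  bounded_eval c t v = S y -> t <= t' -> bounded_eval c t' v = S y.
Proof.
  revert t t' v y.
  induction c as [n| |n i|m n f IHf gs IHgs|n g IHg h IHh|n f IHf];
    intros t t' v y H Ht; simpl in *; auto.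
  - destruct (prod_fin m (fun i => bounded_eval (gs i) t v)) eqn:Ep; [discriminate|].
    assert (Hgs : forall i, bounded_eval (gs i) t' v = bounded_eval (gs i) t v).
    { intros i. assert (Hi : bounded_eval (gs i) t v <> 0)
        by (apply (proj1 (prod_fin_neq0 (fun i => bounded_eval (gs i) t v))); congruence).
      destruct (bounded_eval (gs i) t v) eqn:Ei; [contradiction | exact (IHgs i _ _ _ _ Ei Ht)]. }
    rewrite (prod_fin_ext _ _ Hgs), Ep; simpl.
    rewrite (vec_of_fun_ext _ (fun i => pred (bounded_eval (gs i) t v)))
      by (intros i; rewrite Hgs; reflexivity).
    exact (IHf _ _ _ _ H Ht).
  - revert y H; induction (Vector.hd v) as [|k IHk]; intros y H; simpl in *.
    + exact (IHg _ _ _ _ H Ht).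
    + destruct (nat_rect _ _ _ k) eqn:Ek in H; [discriminate|].
      rewrite (IHk _ Ek); exact (IHh _ _ _ _ H Ht).
  - destruct (mu_search (fun z => bounded_eval f t (Vector.cons nat z n v)) t)
      as [|[|y']] eqn:E; simpl in H; try discriminate.
    injection H as ->.
    rewrite (mu_search_stable _ _ t t' y E Ht); [reflexivity|].
    intros z Hz; destruct (bounded_eval f t (Vector.cons nat z n v)) eqn:Ez;
      [contradiction | exact (IHf _ _ _ _ Ez Ht)].
Qed.

Definition eventually (P : nat -> Prop) : Prop := exists t0, forall t, t0 <= t -> P t.

Lemma eventually_and (P Q : nat -> Prop) :
  eventually P -> eventually Q -> eventually (fun t => P t /\ Q t).
Proof.
  intros [t1 H1] [t2 H2]; exists (t1 + t2); intros t Ht; split; [apply H1 | apply H2]; lia.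
Qed.

Lemma eventually_gt y : eventually (fun t => y < t).
Proof. exists (S y); intros t Ht; lia. Qed.

Lemma eventually_forall_fin {m} (P : Fin.t m -> nat -> Prop) :
  (forall i, eventually (P i)) -> eventually (fun t => forall i, P i t).
Proof.
  revert P; induction m as [|m IH]; intros P H.
  - exists 0; intros t _ i; apply (Fin.case0 (fun i => P i t) i).
  - destruct (eventually_and _ _ (H Fin.F1) (IH (fun i => P (Fin.FS i)) (fun i => H (Fin.FS i))))
      as [t0 H0].
    exists t0; intros t Ht i; destruct (H0 t Ht) as [H1 HS].
    apply (Fin.caseS' i); [exact H1 | exact HS].
Qed.

Lemma eventually_forall_below y (P : nat -> nat -> Prop) :
  (forall z, z < y -> eventually (P z)) -> eventually (fun t => forall z, z < y -> P z t).
Proof.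
  induction y as [|y IH]; intros H; [exists 0; intros; lia|].
  destruct (eventually_and _ _ (IH (fun z Hz => H z ltac:(lia))) (H y ltac:(lia))) as [t0 H0].
  exists t0; intros t Ht z Hz; destruct (H0 t Ht) as [Hlow Hy].
  destruct (Nat.eq_dec z y) as [->|]; [exact Hy | apply Hlow; lia].
Qed.

(* A [Fixpoint] rather than [induction]: the generated induction principle gives no
   hypothesis for the premises of [ev_mu] hidden under an existential. *)
Fixpoint bounded_eval_complete {n} (c : code n) v y (H : ev c v y) {struct H} :
  eventually (fun t => bounded_eval c t v = S y).
Proof.
  destruct H as [n v|v|n i v|m n f gs v w y Hgs Hf|n g h v y Hg
                |n g h k v z y Hrec Hh|n f v y Hy Hz].
  - exists 0; reflexivity.
  - exists 0; reflexivity.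
  - exists 0; reflexivity.
  - destruct (eventually_and _ _
      (eventually_forall_fin _ (fun i => bounded_eval_complete _ _ _ _ (Hgs i)))
      (bounded_eval_complete _ _ _ _ Hf)) as [t0 H0].
    exists t0; intros t Ht; destruct (H0 t Ht) as [Egs Ef]; simpl.
    assert (Hp : prod_fin m (fun i => bounded_eval (gs i) t v) <> 0)
      by (apply prod_fin_neq0; intros i; rewrite Egs; discriminate).
    destruct (prod_fin m (fun i => bounded_eval (gs i) t v)); [contradiction|]; simpl.
    rewrite (vec_of_fun_ext _ (Vector.nth w)) by (intros i; rewrite Egs; reflexivity).
    rewrite vec_of_fun_nth; exact Ef.
  - exact (bounded_eval_complete _ _ _ _ Hg).
  - destruct (eventually_and _ _ (bounded_eval_complete _ _ _ _ Hrec)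
      (bounded_eval_complete _ _ _ _ Hh)) as [t0 H0].
    exists t0; intros t Ht; destruct (H0 t Ht) as [Erec Eh].
    simpl in Erec |- *; rewrite Erec; exact Eh.
  - assert (Hbelow : eventually (fun t => forall z, z < y ->
                       2 <= bounded_eval f t (Vector.cons nat z n v))).
    { apply eventually_forall_below; intros z' Hz'.
      destruct (Hz z' Hz') as [r Hr]; destruct (bounded_eval_complete _ _ _ _ Hr) as [t0 H0].
      exists t0; intros t Ht; rewrite (H0 t Ht); lia. }
    destruct (eventually_and _ _ (eventually_and _ _ (bounded_eval_complete _ _ _ _ Hy) Hbelow)
      (eventually_gt y)) as [t0 H0].
    exists t0; intros t Ht; destruct (H0 t Ht) as [[Ey Ebelow] Hyt]; simpl.
    rewrite (mu_search_finds _ t y Ey Ebelow Hyt); reflexivity.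
Qed.

Definition last_witness (P : nat -> nat) (s : nat) : nat :=
  nat_rect (fun _ => nat) 0 (fun j r => ifz (P j) r (S j)) s.

Lemma last_witness_spec P s j : last_witness P s = S j -> j < s /\ P j <> 0.
Proof.
  induction s as [|s IH]; intros H; [discriminate|].
  change (ifz (P s) (last_witness P s) (S s) = S j) in H.
  destruct (P s) eqn:E; simpl in H.
  - destruct (IH H); split; [lia | assumption].
  - injection H as <-; split; [lia | congruence].
Qed.

Lemma last_witness_ge P s j0 :
  j0 < s -> P j0 <> 0 -> exists j, last_witness P s = S j /\ j0 <= j.
Proof.
  induction s as [|s IH]; intros Hs Hp; [lia|].
  change (exists j, ifz (P s) (last_witness P s) (S s) = S j /\ j0 <= j).
  destruct (P s) eqn:E; simpl.
  - apply IH; [|exact Hp]. destruct (Nat.eq_dec j0 s) as [->|]; [contradiction | lia].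
  - exists s; split; [reflexivity | lia].
Qed.

Lemma PRn_last_witness {n} {P : Vector.t nat (S n) -> nat} {s} : PRn (S n) P -> PRn n s ->
  PRn n (fun v => last_witness (fun j => P (Vector.cons nat j n v)) (s v)).
Proof.
  intros HP Hs.
  assert (HP' : PRn (S (S n)) (fun w =>
     P (Vector.cons nat (Vector.nth w Fin.F1) n (Vector.tl (Vector.tl w)))))
    by exact (PRn_comp HP (PRvec_cons (PRn_proj _ Fin.F1) (PRvec_tl (PRvec_tl (PRvec_id _))))).
  exact (PRn_prec (PRn_const n 0)
    (PRn_ifz HP' (PRn_proj _ (Fin.FS Fin.F1)) (PRn_succ (PRn_proj _ Fin.F1))) Hs).
Qed.

Lemma isPR_of_PRn1 (F : nat -> nat) : PRn 1 (fun v => F (Vector.hd v)) -> isPR F.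
Proof. intros [c [Hc Ev]]; exists c; split; [exact Hc | intros x; exact (Ev (vec1 x))]. Qed.

Local Close Scope nat_scope.
Local Open Scope Q_scope.

Definition frac (p q r : nat) : Q :=
  (inject_Z (Z.of_nat p) - inject_Z (Z.of_nat q)) / inject_Z (Z.of_nat (r + 1)).

Lemma Fseq_frac F f g h : F f -> F g -> F h -> Fseq F (fun x => frac (f x) (g x) (h x)).
Proof. intros Hf Hg Hh; exists f, g, h; repeat split; auto; intros x; apply Qeq_refl. Qed.

Lemma Q2R_frac p q r : Q2R (frac p q r) = ((INR p - INR q) / (INR r + 1))%R.
Proof.
  unfold frac; rewrite Q2R_div by (unfold Qeq; simpl; lia).
  rewrite Q2R_minus; unfold Q2R; simpl.
  rewrite !INR_IZR_INZ, Znat.Nat2Z.inj_add, plus_IZR; simpl.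
  pose proof (pos_INR r) as Hr; rewrite INR_IZR_INZ in Hr.
  field; lra.
Qed.

Lemma frac_unit_small (eps : Q) :
  0 < eps -> exists k, forall j, (k <= j)%nat -> Qabs (frac 1 0 j) < eps.
Proof.
  intros Heps; apply Qlt_Rlt in Heps; rewrite RMicromega.Q2R_0 in Heps.
  destruct (archimed_cor1 _ Heps) as [k [Hk Hk0]].
  exists k; intros j Hj; apply Rlt_Qlt.
  assert (Hjk : (INR k <= INR j)%R) by (apply le_INR; exact Hj).
  assert (Hk' : (0 < INR k)%R) by (apply lt_0_INR; exact Hk0).
  rewrite Qabs_pos.
  - rewrite Q2R_frac; simpl INR.
    apply (Rle_lt_trans _ (/ INR k)); [|exact Hk].
    unfold Rdiv; rewrite Rminus_0_r, Rmult_1_l; apply Rinv_le_contravar; lra.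
  - apply Rle_Qle; rewrite Q2R_frac, RMicromega.Q2R_0; simpl INR.
    apply Rlt_le, Rdiv_lt_0_compat; lra.
Qed.

Definition stage (c : code 1) (x j : nat) : nat := bounded_eval c x (vec1 j).

Lemma PRn_stage c {k} {x j : Vector.t nat k -> nat} :
  PRn k x -> PRn k j -> PRn k (fun v => stage c (x v) (j v)).
Proof. intros Hx Hj; exact (PRn_bounded_eval c _ _ _ Hx (PRvec_cons Hj (PRvec_nil k))). Qed.

Lemma stage_value c (F : nat -> nat) (Hc : forall j, ev c (vec1 j) (F j)) x j a :
  stage c x j = S a -> a = F j.
Proof.
  intros Ha; destruct (bounded_eval_complete _ _ _ (Hc j)) as [t0 H0].
  assert (E1 := bounded_eval_mono _ x (x + t0) _ _ Ha ltac:(lia)).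
  rewrite (H0 (x + t0)%nat ltac:(lia)) in E1; congruence.
Qed.

Section Approximation.

Variables (cf cg ch : code 1) (f g h : nat -> nat).
Hypotheses (Hf : forall x, ev cf (vec1 x) (f x)) (Hg : forall x, ev cg (vec1 x) (g x))
  (Hh : forall x, ev ch (vec1 x) (h x)).

Definition converged (x j : nat) : nat := (stage cf x j * stage cg x j * stage ch x j)%nat.

(* [S j] for the largest [j <= x] at which all three codes have converged by stage [x],
   and [0] if there is none. *)
Definition best (x : nat) : nat := last_witness (converged x) (S x).

Definition value_at_best (c : code 1) (x : nat) : nat :=
  ifz (best x) 0 (pred (stage c x (pred (best x)))).

Definition approx (x : nat) : Q :=
  frac (value_at_best cf x) (value_at_best cg x) (value_at_best ch x).

Definition error (M x : nat) : Q := frac (ifz (best x) M 1) 0 (pred (best x)).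

Lemma PRn_best : PRn 1 (fun v => best (Vector.hd v)).
Proof.
  set (x := fun w : Vector.t nat 2 => Vector.hd (Vector.tl w)).
  set (j := fun w : Vector.t nat 2 => Vector.hd w).
  assert (Hx : PRn 2 x) by exact (PRn_hd (PRvec_tl (PRvec_id 2))).
  assert (Hj : PRn 2 j) by exact (PRn_hd (PRvec_id 2)).
  exact (PRn_last_witness
    (PRn_mul (PRn_mul (PRn_stage cf Hx Hj) (PRn_stage cg Hx Hj)) (PRn_stage ch Hx Hj))
    (PRn_succ (PRn_hd (PRvec_id 1)))).
Qed.

Lemma isPR_value_at_best c : isPR (value_at_best c).
Proof.
  apply isPR_of_PRn1, PRn_ifz; [exact PRn_best | apply PRn_const |].
  exact (PRn_pred (PRn_stage c (PRn_hd (PRvec_id 1)) (PRn_pred PRn_best))).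
Qed.

Lemma PRseq_approx : PRseq approx.
Proof. apply Fseq_frac; apply isPR_value_at_best. Qed.

Lemma PRseq_error M : PRseq (error M).
Proof.
  apply Fseq_frac; apply isPR_of_PRn1.
  - exact (PRn_ifz PRn_best (PRn_const 1 M) (PRn_const 1 1)).
  - apply PRn_const.
  - exact (PRn_pred PRn_best).
Qed.

Lemma approx_at_best x j : best x = S j -> approx x = frac (f j) (g j) (h j).
Proof.
  intros Hx; destruct (last_witness_spec _ _ _ Hx) as [_ Hconv].
  unfold converged in Hconv; rewrite !Nat.mul_eq_0 in Hconv.
  assert (Hvalue : forall c F, (forall j, ev c (vec1 j) (F j)) ->
                   stage c x j <> 0%nat -> value_at_best c x = F j).
  { intros c F Hc Hs; unfold value_at_best; rewrite Hx; simpl.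
    destruct (stage c x j) as [|a] eqn:Ea; [contradiction | exact (stage_value c F Hc x j a Ea)]. }
  unfold approx; rewrite (Hvalue cf f), (Hvalue cg g), (Hvalue ch h); auto.
Qed.

Lemma best_unbounded k : exists x j, best x = S j /\ (k <= j)%nat.
Proof.
  destruct (eventually_and _ _ (eventually_and _ _ (bounded_eval_complete _ _ _ (Hf k))
    (bounded_eval_complete _ _ _ (Hg k))) (bounded_eval_complete _ _ _ (Hh k))) as [t0 H0].
  destruct (H0 (k + t0)%nat ltac:(lia)) as [[Ef Eg] Eh].
  destruct (last_witness_ge (converged (k + t0)) (S (k + t0)) k) as [j Hj]; [lia | |].
  - unfold converged, stage; rewrite Ef, Eg, Eh; discriminate.
  - exists (k + t0)%nat, j; exact Hj.
Qed.

Lemma error_small M eps : 0 < eps -> exists x, Qabs (error M x) < eps.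
Proof.
  intros Heps; destruct (frac_unit_small eps Heps) as [k Hk].
  destruct (best_unbounded k) as [x [j [Hx Hkj]]].
  exists x; unfold error; rewrite Hx; exact (Hk j Hkj).
Qed.

Lemma approx_within_error (alpha : R) (A : nat -> Q) M :
  (forall j, A j == frac (f j) (g j) (h j)) ->
  (forall j, (Rabs (Q2R (A j) - alpha) <= 1 / (INR j + 1))%R) ->
  (INR M > Rabs alpha)%R ->
  forall x, (Rabs (Q2R (approx x) - alpha) <= Q2R (error M x))%R.
Proof.
  intros HA Hbound HM x; unfold error; destruct (best x) as [|j] eqn:Hx; simpl.
  - unfold approx, value_at_best; rewrite Hx; simpl.
    rewrite !Q2R_frac; simpl INR.
    replace ((0 - 0) / (0 + 1))%R with 0%R by field.
    replace ((INR M - 0) / (0 + 1))%R with (INR M) by field.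
    rewrite Rminus_0_l, Rabs_Ropp; lra.
  - rewrite (approx_at_best x j Hx), <- (Qeq_eqR _ _ (HA j)), Q2R_frac; simpl INR.
    replace ((1 - 0) / (INR j + 1))%R with (1 / (INR j + 1))%R by (f_equal; ring).
    exact (Hbound j).
Qed.

End Approximation.

Theorem mainTheorem18 (alpha : R) :
  computable_real alpha ->
  exists A E : nat -> Q, PRseq A /\ PRseq E /\
    (forall eps : Q, 0 < eps -> exists x, Qabs (E x) < eps) /\
    (forall x, (Rabs (Q2R (A x) - alpha) <= Q2R (E x))%R).
Proof.
  intros [A [[f [g [h [[cf Hf] [[cg Hg] [[ch Hh] HA]]]]]] Hbound]].
  destruct (INR_unbounded (Rabs alpha)) as [M HM].
  exists (approx cf cg ch), (error cf cg ch M); repeat split.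
  - apply PRseq_approx.
  - apply PRseq_error.
  - exact (error_small cf cg ch f g h Hf Hg Hh M).
  - exact (approx_within_error cf cg ch f g h Hf Hg Hh alpha A M HA Hbound HM).
Qed.
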